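(* For every integer $r\geq 0$, $$t(\underbrace{2,2,\ldots,2}_{r},3)=\sum_{k=1}^{r+1}(-1)^{k+1}\,d_{r,0}^k\,\frac{1}{2^{2k}}\,\zeta(2k+1)\,t(\underbrace{2,2,\ldots,2}_{r+1-k}),$$ where $d_{r,0}^k=\binom{2k}{2r+1}+\left(1-\frac{1}{2^{2k}}\right)2k$.
   Context: For positive integers $k_1,\ldots,k_m$ with $k_m>1$, the multiple $t$-value is $t(k_1,\ldots,k_m)=\sum_{1\leq n_1<n_2<\cdots<n_m}\frac{1}{(2n_1-1)^{k_1}\cdots(2n_m-1)^{k_m}}$; the empty $t$-value ($m=0$) is $1$. $\zeta$ is the Riemann zeta function. Binomial coefficients $\binom{a}{b}$ with $b>a$ are $0$. *)

From Stdlib Require Import Reals List.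
From Coquelicot Require Import Coquelicot.
Open Scope R_scope.

Fixpoint rsum (f : nat -> R) (lo cnt : nat) : R :=
  match cnt with
  | O => 0
  | S c => f lo + rsum f (S lo) c
  end.

Fixpoint binom (a b : nat) : nat :=
  match a, b with
  | _, O => 1
  | O, S _ => 0
  | S a', S b' => binom a' b' + binom a' (S b')
  end.

(* tpart ks a N = sum over a < n_1 < n_2 < ... < n_m <= N of
   1 / ((2n_1-1)^{k_1} ... (2n_m-1)^{k_m}),  ks = [k_1; ...; k_m]. *)
Fixpoint tpart (ks : list nat) (a N : nat) : R :=
  match ks with
  | nil => 1
  | k :: ks' =>
      rsum (fun n => / (INR (2 * n - 1)) ^ k * tpart ks' n N) (S a) (N - a)
  end.

Definition mtv (ks : list nat) : R := real (Lim_seq (fun N => tpart ks 0 N)).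

Definition zeta (s : nat) : R :=
  real (Lim_seq (fun N => rsum (fun n => / (INR n) ^ s) 1 N)).

Definition d_r0 (r k : nat) : R :=
  INR (binom (2 * k) (2 * r + 1)) + (1 - / 2 ^ (2 * k)) * INR (2 * k).

From Stdlib Require Import Reals List Lra Lia.
From Coquelicot Require Import Coquelicot.
Open Scope R_scope.

(** Write u_M = 2M+1, y_n = 2n, and let e_j(N), T_r(N) be the truncations at N of
    t(2,...,2) (j twos) and t(2,...,2,3) (r twos), so T_r(N) = sum_{M<N} e_r(M) / u_M^3.
    With P_m(x) = prod_{i<m} u_i^2 / (u_i^2 - x^2), the values rho(m,n) = P_m'(y_n)
    telescope along n to sum_{n>=1} rho(M+1,n) = 1 / (2 u_M).  Substituting this for one
    factor 1/u_M gives T_r(N) = 2 sum_{n>=1} Q(N,n) with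
    Q(N,n) = sum_{M<N} e_r(M) rho(M+1,n) / u_M^2, and Q has a closed form in N because
    e_j and the coefficients of P_N'(y_n), P_N(y_n) in powers of 1/y_n obey dual recursions
    in N.  As N -> oo, P_N(y_n) -> (-1)^n and P_N'(y_n) -> 0 with |P_N|, |P_N'| <= 1, so
    dominated convergence leaves plain and alternating sums of 1/(2n)^(2k+3), which are
    multiples of zeta(2k+3). *)

Lemma rsum_ext f g lo c :
  (forall k, (lo <= k < lo + c)%nat -> f k = g k) -> rsum f lo c = rsum g lo c.
Proof.
  revert lo; induction c as [|c IH]; intros lo H; simpl; [reflexivity|].
  rewrite (H lo) by lia. rewrite (IH (S lo)); [reflexivity|].
  intros k Hk; apply H; lia.
Qed.

Lemma rsum_Sr f lo c : rsum f lo (S c) = rsum f lo c + f (lo + c)%nat.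
Proof.
  revert lo; induction c as [|c IH]; intros lo.
  - simpl. rewrite Nat.add_0_r. ring.
  - change (rsum f lo (S (S c))) with (f lo + rsum f (S lo) (S c)).
    rewrite IH. simpl. replace (S (lo + c)) with (lo + S c)%nat by lia. ring.
Qed.

Lemma rsum_shift f lo c : rsum f (S lo) c = rsum (fun k => f (S k)) lo c.
Proof. revert lo; induction c; intros; simpl; [ring|rewrite IHc; ring]. Qed.

Lemma rsum_split f lo a b : rsum f lo (a + b) = rsum f lo a + rsum f (lo + a) b.
Proof.
  revert lo; induction a; intros lo; simpl.
  - rewrite Nat.add_0_r; ring.
  - rewrite IHa. replace (S lo + a)%nat with (lo + S a)%nat by lia. ring.
Qed.

Lemma rsum_0 lo c : rsum (fun _ => 0) lo c = 0.
Proof. revert lo; induction c; intros; simpl; [ring|rewrite IHc; ring]. Qed.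

Lemma rsum_add f g lo c :
  rsum (fun k => f k + g k) lo c = rsum f lo c + rsum g lo c.
Proof. revert lo; induction c; intros; simpl; [ring|rewrite IHc; ring]. Qed.

Lemma rsum_sub f g lo c :
  rsum (fun k => f k - g k) lo c = rsum f lo c - rsum g lo c.
Proof. revert lo; induction c; intros; simpl; [ring|rewrite IHc; ring]. Qed.

Lemma rsum_scal a f lo c : rsum (fun k => a * f k) lo c = a * rsum f lo c.
Proof. revert lo; induction c; intros; simpl; [ring|rewrite IHc; ring]. Qed.

Lemma rsum_swap (F : nat -> nat -> R) a K b M :
  rsum (fun n => rsum (fun k => F k n) a K) b M =
  rsum (fun k => rsum (fun n => F k n) b M) a K.
Proof.
  revert b; induction M; intros b; simpl.
  - rewrite rsum_0; ring.
  - rewrite IHM, <- rsum_add. apply rsum_ext. intros; simpl; ring.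
Qed.

Lemma rsum_telescope (G : nat -> R) c :
  rsum (fun k => G (S k) - G k) 0 c = G c - G 0%nat.
Proof. induction c; [simpl; ring|]. rewrite rsum_Sr, IHc. simpl. ring. Qed.

Lemma rsum_le f g lo c :
  (forall k, (lo <= k < lo + c)%nat -> f k <= g k) -> rsum f lo c <= rsum g lo c.
Proof.
  revert lo; induction c; intros lo H; simpl; [lra|].
  assert (IH := IHc (S lo) ltac:(intros k Hk; apply H; lia)).
  specialize (H lo ltac:(lia)). lra.
Qed.

Lemma rsum_abs f lo c : Rabs (rsum f lo c) <= rsum (fun k => Rabs (f k)) lo c.
Proof.
  revert lo; induction c; intros; simpl; [rewrite Rabs_R0; lra|].
  eapply Rle_trans; [apply Rabs_triang|]. specialize (IHc (S lo)); lra.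
Qed.

Lemma is_lim_seq_rsum (F : nat -> nat -> R) (l : nat -> R) lo c :
  (forall k, (lo <= k < lo + c)%nat -> is_lim_seq (fun N => F N k) (l k)) ->
  is_lim_seq (fun N => rsum (F N) lo c) (rsum l lo c).
Proof.
  revert lo; induction c; intros lo H; simpl; [apply is_lim_seq_const|].
  apply is_lim_seq_plus'; [apply H; lia|apply IHc; intros; apply H; lia].
Qed.

(* In generating-function terms e'(x) = (1 + a x) e(x) and c(x) = (1 + a x) c'(x) + const,
   hence e' c' - e c = (c'(0) - c(0)) e. *)
Section ConvolutionStep.

Variables (a : R) (e e' c c' : nat -> R).
Hypothesis e'_0 : e' 0%nat = e 0%nat.
Hypothesis e'_S : forall j, e' (S j) = e (S j) + a * e j.
Hypothesis c_S : forall k, c (S k) = c' (S k) + a * c' k.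

Lemma rsum_conv_step r :
  rsum (fun k => e' (r - k) * c' k) 0 (S r) - rsum (fun k => e (r - k) * c k) 0 (S r)
  = e r * (c' 0%nat - c 0%nat).
Proof.
  destruct r as [|r]; [simpl; rewrite e'_0; ring|].
  rewrite (rsum_Sr (fun k => e' (S r - k) * c' k)), Nat.sub_diag, e'_0.
  rewrite (rsum_ext (fun k => e' (S r - k) * c' k)
             (fun k => e (S r - k) * c' k + a * (e (r - k) * c' k)))
    by (intros k Hk; replace (S r - k)%nat with (S (r - k)) by lia; rewrite e'_S; ring).
  change (rsum (fun k => e (S r - k) * c k) 0 (S (S r)))
    with (e (S r) * c 0%nat + rsum (fun k => e (S r - k) * c k) 1 (S r)).
  rewrite rsum_shift.
  rewrite (rsum_ext (fun k => e (S r - S k) * c (S k))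
             (fun k => e (r - k) * c' (S k) + a * (e (r - k) * c' k)))
    by (intros k Hk; simpl; rewrite c_S; ring).
  rewrite !rsum_add, !rsum_scal.
  change (rsum (fun k => e (S r - k) * c' k) 0 (S r))
    with (e (S r) * c' 0%nat + rsum (fun k => e (S r - k) * c' k) 1 r).
  rewrite rsum_shift, (rsum_Sr (fun k => e (r - k) * c' (S k))), Nat.sub_diag.
  simpl. ring.
Qed.

End ConvolutionStep.

(** * Series over n >= 1 and dominated convergence *)

Lemma real_Lim_seq_eq u (l : R) : is_lim_seq u l -> real (Lim_seq u) = l.
Proof. intros H. now rewrite (is_lim_seq_unique _ _ H). Qed.

Definition Series1 (f : nat -> R) : R := real (Lim_seq (fun K => rsum f 1 K)).

Section DominatedSeries.

Variables (w : nat -> R) (W : R).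
Hypothesis w_ge0 : forall n, (1 <= n)%nat -> 0 <= w n.
Hypothesis w_sum : is_lim_seq (fun K => rsum w 1 K) W.

Definition dominated (f : nat -> R) := forall n, (1 <= n)%nat -> Rabs (f n) <= w n.

Lemma rsum_le_lim K : rsum w 1 K <= W.
Proof.
  apply (is_lim_seq_incr_compare _ W w_sum). intros n.
  rewrite rsum_Sr. specialize (w_ge0 (1 + n)%nat ltac:(lia)). lra.
Qed.

Lemma Series1_correct f : dominated f -> is_lim_seq (fun K => rsum f 1 K) (Series1 f).
Proof.
  intros Hf.
  set (g := fun n => f n + w n).
  assert (Hinc : forall K, rsum g 1 K <= rsum g 1 (S K)).
  { intros K. rewrite rsum_Sr. unfold g. specialize (Hf (1 + K)%nat ltac:(lia)).
    apply Rabs_le_between in Hf. lra. }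
  assert (Hb : forall K, rsum g 1 K <= 2 * W).
  { intros K. unfold g. rewrite rsum_add. pose proof (rsum_le_lim K).
    assert (rsum f 1 K <= rsum w 1 K).
    { apply rsum_le. intros k Hk. specialize (Hf k ltac:(lia)).
      apply Rabs_le_between in Hf. lra. }
    lra. }
  destruct (ex_finite_lim_seq_incr _ (2 * W) Hinc Hb) as [Lg HLg].
  assert (H : is_lim_seq (fun K => rsum f 1 K) (Lg - W)).
  { eapply is_lim_seq_ext; [|apply (is_lim_seq_minus' _ _ _ _ HLg w_sum)].
    intros K. unfold g. rewrite rsum_add. ring. }
  unfold Series1. now rewrite (real_Lim_seq_eq _ _ H).
Qed.

Lemma Series1_tail_le f : dominated f ->
  forall K, Rabs (Series1 f - rsum f 1 K) <= W - rsum w 1 K.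
Proof.
  intros Hf K.
  assert (Htail : forall M, Rabs (rsum f 1 (M + K) - rsum f 1 K) <= W - rsum w 1 K).
  { intros M. rewrite Nat.add_comm, rsum_split.
    replace (rsum f 1 K + rsum f (1 + K) M - rsum f 1 K) with (rsum f (1 + K) M) by ring.
    eapply Rle_trans; [apply rsum_abs|].
    eapply Rle_trans; [apply (rsum_le _ w); intros k Hk; apply Hf; lia|].
    pose proof (rsum_le_lim (K + M)) as HW. rewrite rsum_split in HW. lra. }
  assert (Hlim : is_lim_seq (fun M => Rabs (rsum f 1 (M + K) - rsum f 1 K))
                   (Rabs (Series1 f - rsum f 1 K))).
  { apply (is_lim_seq_abs _ (Series1 f - rsum f 1 K)).
    apply is_lim_seq_minus'; [|apply is_lim_seq_const].
    apply (is_lim_seq_incr_n (fun M => rsum f 1 M) K). now apply Series1_correct. }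
  exact (is_lim_seq_le _ _ _ _ Htail Hlim (is_lim_seq_const _)).
Qed.

Lemma Series1_dominated_cvg (f : nat -> nat -> R) (g : nat -> R) :
  (forall N, dominated (f N)) ->
  (forall n, (1 <= n)%nat -> is_lim_seq (fun N => f N n) (g n)) ->
  is_lim_seq (fun N => Series1 (f N)) (Series1 g).
Proof.
  intros Hf Hg.
  assert (Hgw : dominated g).
  { intros n Hn. pose proof (is_lim_seq_abs _ _ (Hg n Hn)) as H.
    exact (is_lim_seq_le _ _ _ _ (fun N => Hf N n Hn) H (is_lim_seq_const (w n))). }
  apply is_lim_seq_Reals. intros eps Heps.
  destruct (proj1 (is_lim_seq_Reals _ _) w_sum (eps / 3)) as [K HK]; [lra|].
  specialize (HK K (le_n K)). unfold R_dist in HK. apply Rabs_lt_between in HK.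
  assert (Hhead : is_lim_seq (fun N => rsum (f N) 1 K) (rsum g 1 K)).
  { apply is_lim_seq_rsum. intros k Hk; apply Hg; lia. }
  destruct (proj1 (is_lim_seq_Reals _ _) Hhead (eps / 3)) as [N0 HN0]; [lra|].
  exists N0. intros N HN. specialize (HN0 N HN). unfold R_dist in *.
  pose proof (Series1_tail_le (f N) (Hf N) K).
  pose proof (Series1_tail_le g Hgw K).
  replace (Series1 (f N) - Series1 g) with
    ((Series1 (f N) - rsum (f N) 1 K) + (rsum (f N) 1 K - rsum g 1 K)
     - (Series1 g - rsum g 1 K)) by ring.
  eapply Rle_lt_trans; [apply Rabs_triang|]. rewrite Rabs_Ropp.
  eapply Rle_lt_trans; [apply Rplus_le_compat_r, Rabs_triang|]. lra.
Qed.

End DominatedSeries.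

Definition inv_sq (n : nat) : R := / INR n ^ 2.

Lemma inv_sq_pos n : (1 <= n)%nat -> 0 < inv_sq n.
Proof. intros Hn. apply Rinv_0_lt_compat, pow_lt, lt_0_INR. lia. Qed.

Lemma rsum_inv_sq_le K : rsum inv_sq 1 K <= 2 - 2 / (INR K + 1).
Proof.
  induction K; [simpl; unfold Rdiv; rewrite Rplus_0_l, Rinv_1; lra|].
  rewrite rsum_Sr. replace (1 + K)%nat with (S K) by lia.
  change (inv_sq (S K)) with (/ INR (S K) ^ 2). rewrite S_INR. pose proof (pos_INR K).
  assert (/ (INR K + 1) ^ 2 <= 2 / (INR K + 1) - 2 / (INR K + 1 + 1)).
  { replace (2 / (INR K + 1) - 2 / (INR K + 1 + 1))
      with (/ ((INR K + 1) * (INR K + 2) / 2)) by (field; lra).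
    apply Rinv_le_contravar.
    - apply Rdiv_lt_0_compat; nra.
    - apply Rmult_le_reg_r with 2; [lra|]. unfold Rdiv.
      rewrite Rmult_assoc, Rinv_l, Rmult_1_r by lra. nra. }
  lra.
Qed.

Lemma rsum_inv_sq_le2 K : rsum inv_sq 1 K <= 2.
Proof.
  pose proof (rsum_inv_sq_le K). pose proof (pos_INR K).
  assert (0 <= 2 / (INR K + 1)) by (apply Rdiv_le_0_compat; lra). lra.
Qed.

Lemma is_lim_seq_rsum_inv_sq : is_lim_seq (fun K => rsum inv_sq 1 K) (Series1 inv_sq).
Proof.
  apply Lim_seq_correct', (ex_finite_lim_seq_incr _ 2); [|apply rsum_inv_sq_le2].
  intros K. rewrite rsum_Sr. pose proof (inv_sq_pos (1 + K) ltac:(lia)). lra.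
Qed.

Lemma Rabs_div_pow_le_inv_sq c x n e : (1 <= n)%nat -> (2 <= e)%nat ->
  Rabs c <= 1 -> INR n <= x -> Rabs (c / x ^ e) <= inv_sq n.
Proof.
  intros Hn He Hc Hx. unfold inv_sq.
  assert (H1 : 1 <= INR n) by (apply (le_INR 1); lia).
  assert (Hxe : x ^ 2 <= x ^ e).
  { replace e with (2 + (e - 2))%nat by lia. rewrite pow_add.
    pose proof (pow_R1_Rle x (e - 2) ltac:(lra)). pose proof (pow2_ge_0 x). nra. }
  assert (Hx2 : INR n ^ 2 <= x ^ 2) by (apply pow_incr; lra).
  assert (0 < INR n ^ 2) by (apply pow_lt; lra).
  unfold Rdiv. rewrite Rabs_mult, Rabs_inv, (Rabs_right (x ^ e)) by lra.
  apply Rle_trans with (1 * / x ^ e).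
  - apply Rmult_le_compat_r; [apply Rlt_le, Rinv_0_lt_compat|]; lra.
  - rewrite Rmult_1_l. apply Rinv_le_contravar; lra.
Qed.

Lemma Series1_correct_inv_sq f :
  dominated inv_sq f -> is_lim_seq (fun K => rsum f 1 K) (Series1 f).
Proof.
  apply Series1_correct with (Series1 inv_sq); [|exact is_lim_seq_rsum_inv_sq].
  intros n Hn. now apply Rlt_le, inv_sq_pos.
Qed.

Lemma Series1_dominated_cvg_inv_sq (f : nat -> nat -> R) (g : nat -> R) :
  (forall N, dominated inv_sq (f N)) ->
  (forall n, (1 <= n)%nat -> is_lim_seq (fun N => f N n) (g n)) ->
  is_lim_seq (fun N => Series1 (f N)) (Series1 g).
Proof.
  apply Series1_dominated_cvg with (Series1 inv_sq); [|exact is_lim_seq_rsum_inv_sq].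
  intros n Hn. now apply Rlt_le, inv_sq_pos.
Qed.

Lemma is_lim_seq_scal_l' (u : nat -> R) a (l : R) :
  is_lim_seq u l -> is_lim_seq (fun n => a * u n) (a * l).
Proof. exact (is_lim_seq_scal_l u a l). Qed.

Lemma is_lim_seq_inv_INR_S : is_lim_seq (fun n => / INR (S n)) 0.
Proof.
  apply (is_lim_seq_incr_1 (fun n => / INR n)).
  replace (Finite 0) with (Rbar_inv p_infty) by reflexivity.
  apply is_lim_seq_inv; [apply is_lim_seq_INR|discriminate].
Qed.

Lemma Rdiv_mult_l_cancel x A B : x <> 0 -> (x * A) / (x * B) = A / B.
Proof.
  intros Hx. destruct (Req_dec B 0) as [->|HB].
  - now rewrite Rmult_0_r, !Rdiv_0_r.
  - field. auto.
Qed.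

Lemma is_lim_seq_lin_div_lin p q c d : c <> 0 ->
  is_lim_seq (fun n => (p * INR n + q) / (c * INR n + d)) (p / c).
Proof.
  intros Hc. apply is_lim_seq_incr_1.
  apply is_lim_seq_ext with (fun n => (p + q * / INR (S n)) / (c + d * / INR (S n))).
  - intros n. assert (Hx : 0 < INR (S n)) by (apply lt_0_INR; lia).
    rewrite <- (Rdiv_mult_l_cancel (INR (S n))) by lra. f_equal; field; lra.
  - assert (Hlin : forall a b, is_lim_seq (fun n => a + b * / INR (S n)) a).
    { intros a b. replace (Finite a) with (Finite (a + b * 0)) by (f_equal; ring).
      apply is_lim_seq_plus'; [apply is_lim_seq_const|].
      apply is_lim_seq_scal_l', is_lim_seq_inv_INR_S. }
    now apply is_lim_seq_div'.
Qed.

Lemma is_lim_seq_lin_div_quad p q c d e : c <> 0 ->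
  is_lim_seq (fun n => (p * INR n + q) / (c * INR n ^ 2 + d * INR n + e)) 0.
Proof.
  intros Hc. apply is_lim_seq_incr_1.
  set (h := fun n => / INR (S n)).
  apply is_lim_seq_ext with
    (fun n => (p * h n + q * (h n * h n)) / (c + d * h n + e * (h n * h n))).
  - intros n. unfold h. assert (Hx : 0 < INR (S n)) by (apply lt_0_INR; lia).
    rewrite <- (Rdiv_mult_l_cancel (INR (S n) ^ 2)) by (apply pow_nonzero; lra).
    f_equal; field; lra.
  - assert (H0 : is_lim_seq h 0) by exact is_lim_seq_inv_INR_S.
    assert (H00 : is_lim_seq (fun n => h n * h n) 0).
    { replace (Finite 0) with (Finite (0 * 0)) by (f_equal; ring).
      now apply is_lim_seq_mult'. }
    replace (Finite 0) with (Finite ((p * 0 + q * 0) / (c + d * 0 + e * 0)))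
      by (f_equal; field; auto).
    apply is_lim_seq_div'; [| |rewrite ?Rmult_0_r, !Rplus_0_r; exact Hc].
    + apply is_lim_seq_plus'; now apply is_lim_seq_scal_l'.
    + apply is_lim_seq_plus'; [apply is_lim_seq_plus'; [apply is_lim_seq_const|]|];
        now apply is_lim_seq_scal_l'.
Qed.

Lemma tpart_empty_range ks a N : ks <> nil -> (N <= a)%nat -> tpart ks a N = 0.
Proof.
  intros Hks HN. destruct ks as [|k ks]; [easy|]. simpl.
  now replace (N - a)%nat with 0%nat by lia.
Qed.

Lemma tpart_snoc ks k a N : (a <= N)%nat ->
  tpart (ks ++ k :: nil) a (S N) =
  tpart (ks ++ k :: nil) a N + / INR (2 * S N - 1) ^ k * tpart ks a N.
Proof.
  revert a; induction ks as [|k' ks IH]; intros a Ha; cbn [tpart app];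
    replace (S N - a)%nat with (S (N - a)) by lia;
    rewrite rsum_Sr; replace (S a + (N - a))%nat with (S N) by lia.
  - ring.
  - rewrite (tpart_empty_range (ks ++ k :: nil)) by (auto using app_cons_not_nil).
    rewrite Rmult_0_r, Rplus_0_r, <- rsum_scal, <- rsum_add.
    apply rsum_ext. intros n Hn. rewrite IH by lia. ring.
Qed.

Definition oddR (i : nat) : R := 2 * INR i + 1.

Lemma oddR_pos i : 0 < oddR i.
Proof. unfold oddR. pose proof (pos_INR i). lra. Qed.

Lemma inv_oddR_pow_pos i k : 0 < / oddR i ^ k.
Proof. apply Rinv_0_lt_compat, pow_lt, oddR_pos. Qed.

Lemma INR_2S_sub1 N : INR (2 * S N - 1) = oddR N.
Proof.
  replace (2 * S N - 1)%nat with (S (2 * N)) by lia.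
  rewrite S_INR, mult_INR. unfold oddR. simpl. ring.
Qed.

Definition t2 (j N : nat) : R := tpart (repeat 2%nat j) 0 N.
Definition t23 (r N : nat) : R := tpart (repeat 2%nat r ++ 3%nat :: nil) 0 N.

Lemma t2_0 N : t2 0 N = 1.
Proof. reflexivity. Qed.

Lemma t2_S_0 j : t2 (S j) 0 = 0.
Proof. reflexivity. Qed.

Lemma t2_SS j N : t2 (S j) (S N) = t2 (S j) N + / oddR N ^ 2 * t2 j N.
Proof.
  unfold t2. change (repeat 2%nat (S j)) with (2%nat :: repeat 2%nat j).
  rewrite repeat_cons, tpart_snoc, INR_2S_sub1 by lia. reflexivity.
Qed.

Lemma t23_S r N : t23 r (S N) = t23 r N + / oddR N ^ 3 * t2 r N.
Proof. unfold t23, t2. now rewrite tpart_snoc, INR_2S_sub1 by lia. Qed.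

Lemma t23_eq_rsum r N : t23 r N = rsum (fun M => t2 r M / oddR M ^ 3) 0 N.
Proof.
  induction N; [unfold t23; now destruct r|].
  rewrite t23_S, rsum_Sr, IHN. simpl. unfold Rdiv. ring.
Qed.

Lemma t2_ge0 j N : 0 <= t2 j N.
Proof.
  revert j; induction N; intros [|j]; rewrite ?t2_0, ?t2_S_0; try lra.
  rewrite t2_SS. pose proof (IHN (S j)). pose proof (IHN j).
  pose proof (inv_oddR_pow_pos N 2). nra.
Qed.

Lemma t2_le_S j N : t2 j N <= t2 j (S N).
Proof.
  destruct j; [rewrite !t2_0; lra|].
  rewrite t2_SS. pose proof (t2_ge0 j N). pose proof (inv_oddR_pow_pos N 2). nra.
Qed.

Lemma t2_1_le2 N : t2 1 N <= 2.
Proof.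
  eapply Rle_trans; [|apply (rsum_inv_sq_le2 N)].
  induction N; [rewrite t2_S_0; simpl; lra|].
  rewrite t2_SS, t2_0, rsum_Sr. replace (1 + N)%nat with (S N) by lia.
  enough (/ oddR N ^ 2 <= inv_sq (S N)) by lra.
  assert (0 < INR (S N)) by (apply lt_0_INR; lia).
  apply Rinv_le_contravar; [now apply pow_lt|].
  apply pow_incr. unfold oddR. rewrite S_INR in *. pose proof (pos_INR N). lra.
Qed.

Lemma t2_S_le_mul j N : t2 (S j) N <= t2 1 N * t2 j N.
Proof.
  revert j; induction N; intros j; [rewrite t2_S_0, t2_S_0; lra|].
  rewrite !t2_SS, t2_0.
  pose proof (IHN j). pose proof (t2_le_S j N). pose proof (t2_ge0 1 N).
  pose proof (t2_ge0 j N). pose proof (inv_oddR_pow_pos N 2). nra.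
Qed.

Lemma t2_le_pow2 j N : t2 j N <= 2 ^ j.
Proof.
  pose proof (t2_1_le2 N).
  induction j; [rewrite t2_0; simpl; lra|].
  pose proof (t2_S_le_mul j N). pose proof (t2_ge0 1 N). pose proof (t2_ge0 j N).
  simpl. nra.
Qed.

Lemma is_lim_seq_t2 j : is_lim_seq (t2 j) (mtv (repeat 2%nat j)).
Proof.
  apply Lim_seq_correct'.
  apply (ex_finite_lim_seq_incr _ (2 ^ j)); [apply t2_le_S|apply t2_le_pow2].
Qed.

(** * The kernel rho *)

Definition evenR (n : nat) : R := 2 * INR n.

(* pprod m n = P_m(2n), psum m n = (P_m'/P_m)(2n), hence rho m n = P_m'(2n). *)

Fixpoint pprod (m n : nat) : R :=
  match m with
  | O => 1
  | S m' => pprod m' n * (oddR m' ^ 2 / (oddR m' ^ 2 - evenR n ^ 2))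
  end.

Fixpoint psum (m n : nat) : R :=
  match m with
  | O => 0
  | S m' => psum m' n + 2 * evenR n / (oddR m' ^ 2 - evenR n ^ 2)
  end.

Definition rho (m n : nat) : R := pprod m n * psum m n.

Lemma oddR_neq_evenR a b : oddR a <> evenR b.
Proof.
  unfold oddR, evenR. intros H. assert (H0 : INR (2 * a + 1) = INR (2 * b)).
  { rewrite plus_INR, !mult_INR. simpl. lra. }
  apply INR_eq in H0. lia.
Qed.

Lemma oddR_sq_sub_evenR_sq_neq0 m n : oddR m ^ 2 - evenR n ^ 2 <> 0.
Proof.
  pose proof (oddR_neq_evenR m n). pose proof (pos_INR m). pose proof (pos_INR n).
  unfold oddR, evenR in *.
  replace ((2 * INR m + 1) ^ 2 - (2 * INR n) ^ 2) with
    ((2 * INR m + 1 - 2 * INR n) * (2 * INR m + 1 + 2 * INR n)) by ring.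
  apply Rmult_integral_contrapositive; split; lra.
Qed.

Lemma evenR_S n : evenR (S n) = evenR n + 2.
Proof. unfold evenR. rewrite S_INR. ring. Qed.

Lemma pprod_0_r m : pprod m 0 = 1.
Proof.
  induction m; simpl; [reflexivity|]. rewrite IHm. unfold evenR. simpl.
  pose proof (oddR_pos m). field. lra.
Qed.

Lemma psum_0_r m : psum m 0 = 0.
Proof. induction m; simpl; [reflexivity|]. rewrite IHm. unfold evenR. simpl. lra. Qed.

Ltac den_facts m n :=
  pose proof (oddR_sq_sub_evenR_sq_neq0 m n);
  pose proof (oddR_sq_sub_evenR_sq_neq0 m (S n));
  pose proof (oddR_neq_evenR n m); pose proof (oddR_neq_evenR n (S m));
  pose proof (pos_INR n); pose proof (pos_INR m).

Lemma pprod_S_r m n :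
  pprod m (S n) = pprod m n * (evenR n - 2 * INR m + 1) / (evenR n + 2 * INR m + 1).
Proof.
  induction m.
  - simpl. unfold evenR. pose proof (pos_INR n). field. lra.
  - cbn [pprod]. rewrite IHm. den_facts m n.
    rewrite evenR_S in *. unfold oddR, evenR in *. rewrite S_INR in *.
    field. repeat split; lra.
Qed.

Lemma psum_S_r m n :
  psum m (S n) =
  psum m n + 4 * INR m / ((evenR n - 2 * INR m + 1) * (evenR n + 2 * INR m + 1)).
Proof.
  induction m.
  - simpl. unfold evenR. pose proof (pos_INR n). field. lra.
  - cbn [psum]. rewrite IHm. den_facts m n.
    rewrite evenR_S in *. unfold oddR, evenR in *. rewrite S_INR in *.
    field. repeat split; lra.
Qed.

Lemma rho_S_r m n :
  (evenR n + 2 * INR m + 1) * rho m (S n) =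
  (evenR n - 2 * INR m + 1) * rho m n + pprod m n - pprod m (S n).
Proof.
  unfold rho. rewrite pprod_S_r, psum_S_r. den_facts m n.
  unfold oddR, evenR in *. field. lra.
Qed.

Lemma rsum_rho m K :
  (4 * INR m - 2) * rsum (rho m) 1 K =
  1 - (evenR K + 2 * INR m + 1) * rho m (S K) - pprod m (S K).
Proof.
  induction K.
  - simpl rsum. unfold rho. rewrite pprod_S_r, psum_S_r, pprod_0_r, psum_0_r.
    den_facts m 0%nat. unfold oddR, evenR in *. simpl INR in *. field. lra.
  - rewrite rsum_Sr, Rmult_plus_distr_l, IHK. replace (1 + K)%nat with (S K) by lia.
    unfold rho. rewrite (pprod_S_r m (S K)), (psum_S_r m (S K)), evenR_S.
    den_facts m (S K). rewrite evenR_S in *. unfold oddR, evenR in *. rewrite S_INR in *.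
    field. lra.
Qed.

Lemma is_lim_seq_psum m : is_lim_seq (psum m) 0.
Proof.
  induction m; [apply is_lim_seq_const|]. simpl psum.
  replace (Finite 0) with (Finite (0 + 0)) by (f_equal; ring).
  apply is_lim_seq_plus'; [exact IHm|].
  eapply is_lim_seq_ext; [|apply (is_lim_seq_lin_div_quad 4 0 (-4) 0 (oddR m ^ 2)); lra].
  intros n. unfold evenR. unfold Rdiv. f_equal; [ring|f_equal; ring].
Qed.

Lemma ex_lim_seq_pprod m : exists L : R, is_lim_seq (pprod m) L.
Proof.
  induction m as [|m [L HL]]; [exists 1; apply is_lim_seq_const|].
  exists (L * 0). apply is_lim_seq_mult'; [exact HL|].
  eapply is_lim_seq_ext; [|apply (is_lim_seq_lin_div_quad 0 (oddR m ^ 2) (-4) 0 (oddR m ^ 2)); lra].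
  intros n. unfold evenR. unfold Rdiv. f_equal; [ring|f_equal; ring].
Qed.

Lemma is_lim_seq_poly_mul_pprod m p q :
  is_lim_seq (fun n => (p * INR n + q) * pprod (S m) n) 0.
Proof.
  destruct (ex_lim_seq_pprod m) as [L HL].
  replace (Finite 0) with (Finite (L * 0)) by (f_equal; ring).
  apply is_lim_seq_ext with
    (fun n => pprod m n * ((p * oddR m ^ 2 * INR n + q * oddR m ^ 2) /
                           ((-4) * INR n ^ 2 + 0 * INR n + oddR m ^ 2))).
  - intros n. cbn [pprod].
    replace ((-4) * INR n ^ 2 + 0 * INR n + oddR m ^ 2) with (oddR m ^ 2 - evenR n ^ 2)
      by (unfold evenR; ring).
    unfold Rdiv. ring.
  - apply is_lim_seq_mult'; [exact HL|]. apply is_lim_seq_lin_div_quad. lra.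
Qed.

Lemma is_lim_seq_rsum_rho M :
  is_lim_seq (fun K => rsum (rho (S M)) 1 K) (/ (2 * oddR M)).
Proof.
  assert (Hu : 0 < oddR M) by apply oddR_pos.
  assert (Hweight : is_lim_seq (fun K => (evenR K + 2 * INR (S M) + 1) * rho (S M) (S K)) 0).
  { apply is_lim_seq_ext with
      (fun K => ((2 * INR (S K) + oddR M) * pprod (S M) (S K)) * psum (S M) (S K)).
    - intros K. unfold rho, evenR, oddR. rewrite !S_INR. ring.
    - replace (Finite 0) with (Finite (0 * 0)) by (f_equal; ring).
      apply is_lim_seq_mult'.
      + exact (proj1 (is_lim_seq_incr_1 _ 0) (is_lim_seq_poly_mul_pprod M 2 (oddR M))).
      + exact (proj1 (is_lim_seq_incr_1 _ 0) (is_lim_seq_psum (S M))). }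
  assert (Hpprod : is_lim_seq (fun K => pprod (S M) (S K)) 0).
  { apply (is_lim_seq_incr_1 (pprod (S M))).
    eapply is_lim_seq_ext; [|apply (is_lim_seq_poly_mul_pprod M 0 1)].
    intros n. simpl. ring. }
  apply is_lim_seq_ext with
    (fun K => / (2 * oddR M) *
              (1 - (evenR K + 2 * INR (S M) + 1) * rho (S M) (S K) - pprod (S M) (S K))).
  - intros K. rewrite <- rsum_rho. unfold oddR. rewrite S_INR. field. unfold oddR in Hu. lra.
  - replace (Finite (/ (2 * oddR M))) with (Finite (/ (2 * oddR M) * (1 - 0 - 0)))
      by (f_equal; ring).
    apply is_lim_seq_scal_l', is_lim_seq_minus'; [apply is_lim_seq_minus'|]; auto.
    apply is_lim_seq_const.
Qed.

Lemma Rabs_pprod_le1 m n : Rabs (pprod m n) <= 1.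
Proof.
  induction n; [rewrite pprod_0_r, Rabs_R1; lra|].
  rewrite pprod_S_r. set (d := evenR n + 2 * INR m + 1).
  assert (Hd : 0 < d) by (unfold d, evenR; pose proof (pos_INR n); pose proof (pos_INR m); lra).
  assert (Hnum : Rabs (evenR n - 2 * INR m + 1) <= d).
  { unfold d, evenR. pose proof (pos_INR n); pose proof (pos_INR m). apply Rabs_le; lra. }
  unfold Rdiv. rewrite Rabs_mult, Rabs_mult, Rabs_inv, (Rabs_right d) by lra.
  apply Rmult_le_reg_r with d; [lra|]. rewrite Rmult_assoc, Rinv_l, Rmult_1_r by lra.
  pose proof (Rabs_pos (pprod m n)). nra.
Qed.

Lemma Rabs_rho_le1 m n : Rabs (rho m n) <= 1.
Proof.
  destruct m as [|m']; [unfold rho; simpl; rewrite Rmult_0_r, Rabs_R0; lra|].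
  set (m := S m').
  assert (Hm : 1 <= INR m) by (unfold m; rewrite S_INR; pose proof (pos_INR m'); lra).
  induction n; [unfold rho; rewrite psum_0_r, Rmult_0_r, Rabs_R0; lra|].
  set (d := evenR n + 2 * INR m + 1).
  assert (Hd : 0 < d) by (unfold d, evenR; pose proof (pos_INR n); lra).
  assert (Hnum : Rabs (evenR n - 2 * INR m + 1) <= d - 2).
  { unfold d, evenR. pose proof (pos_INR n). apply Rabs_le; lra. }
  assert (E : rho m (S n) =
              ((evenR n - 2 * INR m + 1) * rho m n + pprod m n - pprod m (S n)) / d)
    by (rewrite <- rho_S_r; fold d; field; lra).
  rewrite E. unfold Rdiv. rewrite Rabs_mult, Rabs_inv, (Rabs_right d) by lra.
  apply Rmult_le_reg_r with d; [lra|]. rewrite Rmult_assoc, Rinv_l, Rmult_1_r by lra.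
  set (a := evenR n - 2 * INR m + 1) in *.
  replace (a * rho m n + pprod m n - pprod m (S n))
    with (a * rho m n + pprod m n + - pprod m (S n)) by ring.
  pose proof (Rabs_triang (a * rho m n + pprod m n) (- pprod m (S n))) as T1.
  pose proof (Rabs_triang (a * rho m n) (pprod m n)) as T2.
  rewrite Rabs_Ropp in T1. rewrite Rabs_mult in T2.
  pose proof (Rabs_pprod_le1 m n). pose proof (Rabs_pprod_le1 m (S n)).
  pose proof (Rabs_pos (rho m n)). pose proof (Rabs_pos a). nra.
Qed.

Lemma is_lim_seq_pprod_l n : is_lim_seq (fun m => pprod m n) ((-1) ^ n).
Proof.
  induction n.
  - eapply is_lim_seq_ext; [|apply is_lim_seq_const]. intros m; now rewrite pprod_0_r.
  - eapply is_lim_seq_ext; [intros m; symmetry; rewrite pprod_S_r; unfold Rdiv;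
                            rewrite Rmult_assoc; reflexivity|].
    replace ((-1) ^ S n) with ((-1) ^ n * ((-2) / 2)) by (simpl; field).
    apply is_lim_seq_mult'; [exact IHn|].
    eapply is_lim_seq_ext;
      [|apply (is_lim_seq_lin_div_lin (-2) (evenR n + 1) 2 (evenR n + 1)); lra].
    intros m. unfold Rdiv. f_equal; [ring|f_equal; ring].
Qed.

Lemma is_lim_seq_psum_l n : is_lim_seq (fun m => psum m n) 0.
Proof.
  induction n.
  - eapply is_lim_seq_ext; [|apply is_lim_seq_const]. intros m; now rewrite psum_0_r.
  - eapply is_lim_seq_ext; [intros m; symmetry; apply psum_S_r|].
    replace (Finite 0) with (Finite (0 + 0)) by (f_equal; ring).
    apply is_lim_seq_plus'; [exact IHn|].
    eapply is_lim_seq_ext; [|apply (is_lim_seq_lin_div_quad 4 0 (-4) 0 ((evenR n + 1) ^ 2)); lra].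
    intros m. unfold Rdiv. f_equal; [ring|f_equal; ring].
Qed.

Lemma is_lim_seq_rho_l n : is_lim_seq (fun m => rho m n) 0.
Proof.
  unfold rho. replace (Finite 0) with (Finite ((-1) ^ n * 0)) by (f_equal; ring).
  apply is_lim_seq_mult'; [apply is_lim_seq_pprod_l|apply is_lim_seq_psum_l].
Qed.

(** * The sum over M in closed form *)

Definition qcoef (k N n : nat) : R :=
  (-1) ^ k * (rho N n / evenR n ^ (2 * k + 2)
              - 2 * (INR k + 1) * pprod N n / evenR n ^ (2 * k + 3)).

(* The last term makes [qpart r 0 n] vanish. *)
Definition qpart (r N n : nat) : R :=
  rsum (fun k => t2 (r - k) N * qcoef k N n) 0 (S r)
  + 2 * (-1) ^ r * (INR r + 1) / evenR n ^ (2 * r + 3).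

Lemma evenR_neq0 n : (1 <= n)%nat -> evenR n <> 0.
Proof. intros H. unfold evenR. apply lt_0_INR in H. lra. Qed.

Lemma qcoef_0_S N n : (1 <= n)%nat ->
  qcoef 0 (S N) n - qcoef 0 N n = rho (S N) n / oddR N ^ 2.
Proof.
  intros Hn. unfold qcoef, rho. cbn [pprod psum].
  pose proof (evenR_neq0 n Hn). pose proof (oddR_sq_sub_evenR_sq_neq0 N n).
  pose proof (oddR_pos N). simpl. field. repeat split; lra.
Qed.

Lemma qcoef_S_S k N n : (1 <= n)%nat ->
  qcoef (S k) N n = qcoef (S k) (S N) n + / oddR N ^ 2 * qcoef k (S N) n.
Proof.
  intros Hn. unfold qcoef, rho. cbn [pprod psum].
  pose proof (evenR_neq0 n Hn). pose proof (oddR_sq_sub_evenR_sq_neq0 N n).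
  pose proof (oddR_pos N). assert (evenR n ^ (2 * k) <> 0) by (apply pow_nonzero; auto).
  replace (2 * S k + 2)%nat with (2 * k + 4)%nat by lia.
  replace (2 * S k + 3)%nat with (2 * k + 5)%nat by lia.
  rewrite !pow_add, S_INR. change ((-1) ^ S k) with (-1 * (-1) ^ k).
  field. repeat split; auto using pow_nonzero; lra.
Qed.

Lemma qpart_S r N n : (1 <= n)%nat ->
  qpart r (S N) n - qpart r N n = t2 r N * rho (S N) n / oddR N ^ 2.
Proof.
  intros Hn. unfold qpart.
  replace (rsum (fun k => t2 (r - k) (S N) * qcoef k (S N) n) 0 (S r) + ?[c]
           - (rsum (fun k => t2 (r - k) N * qcoef k N n) 0 (S r) + ?c))
    with (rsum (fun k => t2 (r - k) (S N) * qcoef k (S N) n) 0 (S r)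
          - rsum (fun k => t2 (r - k) N * qcoef k N n) 0 (S r)) by ring.
  rewrite (rsum_conv_step (/ oddR N ^ 2) (fun j => t2 j N) (fun j => t2 j (S N))
             (fun k => qcoef k N n) (fun k => qcoef k (S N) n)).
  - rewrite qcoef_0_S by exact Hn. unfold Rdiv. ring.
  - reflexivity.
  - intros j. rewrite t2_SS. ring.
  - intros k. now apply qcoef_S_S.
Qed.

Lemma qpart_0 r n : (1 <= n)%nat -> qpart r 0 n = 0.
Proof.
  intros Hn. unfold qpart. rewrite rsum_Sr, Nat.add_0_l, Nat.sub_diag, t2_0.
  rewrite (rsum_ext _ (fun _ => 0)), rsum_0.
  - unfold qcoef, rho. cbn [pprod psum].
    pose proof (evenR_neq0 n Hn). field. split; now apply pow_nonzero.
  - intros k Hk. replace (r - k)%nat with (S (r - S k)) by lia. rewrite t2_S_0. ring.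
Qed.

Lemma rsum_t2_rho r N n : (1 <= n)%nat ->
  rsum (fun M => t2 r M * rho (S M) n / oddR M ^ 2) 0 N = qpart r N n.
Proof.
  intros Hn. rewrite <- (Rminus_0_r (qpart r N n)), <- (qpart_0 r n Hn).
  rewrite <- (rsum_telescope (fun M => qpart r M n)).
  apply rsum_ext. intros M _. now rewrite qpart_S.
Qed.

Lemma INR_le_evenR n : INR n <= evenR n.
Proof. unfold evenR. pose proof (pos_INR n). lra. Qed.

Lemma dominated_div_evenR_pow (c : nat -> R) e : (2 <= e)%nat ->
  (forall n, Rabs (c n) <= 1) -> dominated inv_sq (fun n => c n / evenR n ^ e).
Proof.
  intros He Hc n Hn. apply Rabs_div_pow_le_inv_sq; auto using INR_le_evenR.
Qed.

Definition srho (k N : nat) : R := Series1 (fun n => rho N n / evenR n ^ (2 * k + 2)).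
Definition spprod (k N : nat) : R := Series1 (fun n => pprod N n / evenR n ^ (2 * k + 3)).

Definition qseries (r N : nat) : R :=
  rsum (fun k => t2 (r - k) N * ((-1) ^ k * (srho k N - 2 * (INR k + 1) * spprod k N)))
    0 (S r)
  + 2 * (-1) ^ r * (INR r + 1) * Series1 (fun n => / evenR n ^ (2 * r + 3)).

Lemma is_lim_seq_rsum_qpart r N : is_lim_seq (fun K => rsum (qpart r N) 1 K) (qseries r N).
Proof.
  assert (Hcvg : forall (c : nat -> R) e, (2 <= e)%nat -> (forall n, Rabs (c n) <= 1) ->
            is_lim_seq (fun K => rsum (fun n => c n / evenR n ^ e) 1 K)
                       (Series1 (fun n => c n / evenR n ^ e)))
    by (intros; now apply Series1_correct_inv_sq, dominated_div_evenR_pow).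
  apply is_lim_seq_ext with
    (fun K => rsum (fun k => t2 (r - k) N * ((-1) ^ k *
                 (rsum (fun n => rho N n / evenR n ^ (2 * k + 2)) 1 K
                  - 2 * (INR k + 1) * rsum (fun n => pprod N n / evenR n ^ (2 * k + 3)) 1 K)))
                0 (S r)
              + 2 * (-1) ^ r * (INR r + 1) * rsum (fun n => / evenR n ^ (2 * r + 3)) 1 K).
  - intros K. unfold qpart. rewrite rsum_add. f_equal.
    + rewrite rsum_swap. apply rsum_ext. intros k _.
      rewrite <- !rsum_scal, <- rsum_sub, <- !rsum_scal.
      apply rsum_ext. intros n _. unfold qcoef, Rdiv. ring.
    + rewrite <- rsum_scal. apply rsum_ext. intros n _. unfold Rdiv. ring.
  - unfold qseries. apply is_lim_seq_plus'.
    + apply is_lim_seq_rsum. intros k _.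
      apply is_lim_seq_scal_l', is_lim_seq_scal_l', is_lim_seq_minus'.
      * apply Hcvg; [lia|apply Rabs_rho_le1].
      * apply is_lim_seq_scal_l', Hcvg; [lia|apply Rabs_pprod_le1].
    + apply is_lim_seq_scal_l'.
      apply Series1_correct_inv_sq. intros n Hn.
      replace (/ evenR n ^ (2 * r + 3)) with (1 / evenR n ^ (2 * r + 3)) by (unfold Rdiv; ring).
      apply Rabs_div_pow_le_inv_sq; auto using INR_le_evenR; [lia|rewrite Rabs_R1; lra].
Qed.

(* 1 / u_M^3 = (2 / u_M^2) * sum_n rho (S M) n turns the sum over M into a series in n. *)
Lemma is_lim_seq_rsum_qpart_t23 r N : is_lim_seq (fun K => rsum (qpart r N) 1 K) (/ 2 * t23 r N).
Proof.
  apply is_lim_seq_ext with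
    (fun K => rsum (fun M => t2 r M / oddR M ^ 2 * rsum (rho (S M)) 1 K) 0 N).
  - intros K.
    rewrite (rsum_ext (qpart r N) (fun n => rsum (fun M => t2 r M * rho (S M) n / oddR M ^ 2) 0 N))
      by (intros n Hn; symmetry; apply rsum_t2_rho; lia).
    rewrite rsum_swap. apply rsum_ext. intros M _.
    rewrite <- rsum_scal. apply rsum_ext. intros n _. unfold Rdiv. ring.
  - replace (/ 2 * t23 r N) with (rsum (fun M => t2 r M / oddR M ^ 2 * / (2 * oddR M)) 0 N).
    + apply is_lim_seq_rsum. intros M _.
      apply is_lim_seq_scal_l', is_lim_seq_rsum_rho.
    + rewrite t23_eq_rsum, <- rsum_scal. apply rsum_ext. intros M _.
      pose proof (oddR_pos M). field. lra.
Qed.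

Lemma t23_eq_2qseries r N : t23 r N = 2 * qseries r N.
Proof.
  pose proof (is_lim_seq_unique _ _ (is_lim_seq_rsum_qpart r N)) as H1.
  rewrite (is_lim_seq_unique _ _ (is_lim_seq_rsum_qpart_t23 r N)) in H1.
  injection H1 as H1. lra.
Qed.

Lemma is_lim_seq_srho k : is_lim_seq (srho k) 0.
Proof.
  replace (Finite 0) with (Finite (Series1 (fun _ => 0))).
  - apply Series1_dominated_cvg_inv_sq.
    + intros N. apply dominated_div_evenR_pow; [lia|apply Rabs_rho_le1].
    + intros n _. replace (Finite 0) with (Finite (0 * / evenR n ^ (2 * k + 2))) by (f_equal; ring).
      apply is_lim_seq_mult'; [apply is_lim_seq_rho_l|apply is_lim_seq_const].
  - f_equal. apply real_Lim_seq_eq. eapply is_lim_seq_ext; [|apply is_lim_seq_const].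
    intros K. now rewrite rsum_0.
Qed.

Lemma is_lim_seq_spprod k :
  is_lim_seq (spprod k) (Series1 (fun n => (-1) ^ n / evenR n ^ (2 * k + 3))).
Proof.
  apply Series1_dominated_cvg_inv_sq.
  - intros N. apply dominated_div_evenR_pow; [lia|apply Rabs_pprod_le1].
  - intros n _. apply is_lim_seq_mult'; [apply is_lim_seq_pprod_l|apply is_lim_seq_const].
Qed.

Lemma mtv_2s3_eq_series r :
  mtv (repeat 2%nat r ++ 3%nat :: nil) =
  2 * (rsum (fun k => mtv (repeat 2%nat (r - k)) *
                      ((-1) ^ k * (0 - 2 * (INR k + 1) *
                                   Series1 (fun n => (-1) ^ n / evenR n ^ (2 * k + 3)))))
         0 (S r)
       + 2 * (-1) ^ r * (INR r + 1) * Series1 (fun n => / evenR n ^ (2 * r + 3))).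
Proof.
  apply real_Lim_seq_eq. fold (t23 r).
  eapply is_lim_seq_ext; [intros N; symmetry; apply t23_eq_2qseries|].
  apply is_lim_seq_scal_l', is_lim_seq_plus'; [|apply is_lim_seq_const].
  apply is_lim_seq_rsum. intros k _.
  apply is_lim_seq_mult'; [apply is_lim_seq_t2|].
  apply is_lim_seq_scal_l', is_lim_seq_minus'; [apply is_lim_seq_srho|].
  apply is_lim_seq_scal_l', is_lim_seq_spprod.
Qed.

(** * Zeta values *)

Lemma dominated_div_INR_pow (c : nat -> R) s : (2 <= s)%nat ->
  (forall n, Rabs (c n) <= 1) -> dominated inv_sq (fun n => c n / INR n ^ s).
Proof. intros Hs Hc n Hn. apply Rabs_div_pow_le_inv_sq; auto; lra. Qed.

Lemma is_lim_seq_rsum_zeta s : (2 <= s)%nat ->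
  is_lim_seq (fun K => rsum (fun n => / INR n ^ s) 1 K) (zeta s).
Proof.
  intros Hs. change (zeta s) with (Series1 (fun n => / INR n ^ s)).
  apply Series1_correct_inv_sq. intros n Hn. rewrite <- Rdiv_1_l.
  apply (dominated_div_INR_pow (fun _ => 1)); auto. intros; rewrite Rabs_R1; lra.
Qed.

Lemma inv_evenR_pow n s : / evenR n ^ s = / 2 ^ s * / INR n ^ s.
Proof. unfold evenR. now rewrite Rpow_mult_distr, Rinv_mult. Qed.

Lemma Series1_inv_evenR_pow s : (2 <= s)%nat ->
  Series1 (fun n => / evenR n ^ s) = / 2 ^ s * zeta s.
Proof.
  intros Hs. apply real_Lim_seq_eq.
  eapply is_lim_seq_ext; [|apply is_lim_seq_scal_l', (is_lim_seq_rsum_zeta s Hs)].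
  intros K. cbv beta. rewrite <- rsum_scal. apply rsum_ext. intros n _.
  symmetry. apply inv_evenR_pow.
Qed.

Lemma rsum_alt_inv_pow_even s M :
  rsum (fun n => (-1) ^ n / INR n ^ s) 1 (2 * M) =
  - rsum (fun n => / INR n ^ s) 1 (2 * M) + 2 * / 2 ^ s * rsum (fun n => / INR n ^ s) 1 M.
Proof.
  induction M; [simpl; ring|].
  replace (2 * S M)%nat with (S (S (2 * M))) by lia.
  rewrite !rsum_Sr, IHM.
  replace (1 + S (2 * M))%nat with (2 * S M)%nat by lia.
  replace (1 + 2 * M)%nat with (S (2 * M)) by lia.
  replace (1 + M)%nat with (S M) by lia.
  rewrite pow_1_odd, pow_1_even, mult_INR, Rpow_mult_distr.
  replace (INR 2) with 2 by (simpl; ring). unfold Rdiv. rewrite !Rinv_mult. ring.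
Qed.

Lemma Series1_alt_inv_evenR_pow s : (2 <= s)%nat ->
  Series1 (fun n => (-1) ^ n / evenR n ^ s) = / 2 ^ s * (2 * / 2 ^ s - 1) * zeta s.
Proof.
  intros Hs.
  set (alt K := rsum (fun n => (-1) ^ n / INR n ^ s) 1 K).
  assert (Halt : is_lim_seq alt (Series1 (fun n => (-1) ^ n / INR n ^ s))).
  { apply Series1_correct_inv_sq, dominated_div_INR_pow; auto.
    intros n. rewrite pow_1_abs. lra. }
  assert (Hdouble : filterlim (fun M => (2 * M)%nat) eventually eventually)
    by (apply eventually_subseq; intros; lia).
  assert (Heven : is_lim_seq (fun M => alt (2 * M)%nat) ((2 * / 2 ^ s - 1) * zeta s)).
  { unfold alt. eapply is_lim_seq_ext; [intros M; symmetry; apply rsum_alt_inv_pow_even|].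
    replace ((2 * / 2 ^ s - 1) * zeta s) with (- zeta s + 2 * / 2 ^ s * zeta s) by ring.
    apply is_lim_seq_plus'; [apply (is_lim_seq_opp _ (zeta s))|apply is_lim_seq_scal_l'].
    - apply (is_lim_seq_subseq (fun K => rsum (fun n => / INR n ^ s) 1 K)); auto.
      now apply is_lim_seq_rsum_zeta.
    - now apply is_lim_seq_rsum_zeta. }
  assert (Heven' : is_lim_seq (fun M => alt (2 * M)%nat)
                     (Series1 (fun n => (-1) ^ n / INR n ^ s)))
    by exact (is_lim_seq_subseq alt _ _ Hdouble Halt).
  pose proof (is_lim_seq_unique _ _ Heven') as HL.
  rewrite (is_lim_seq_unique _ _ Heven) in HL. injection HL as HL.
  apply real_Lim_seq_eq. rewrite Rmult_assoc, HL.
  eapply is_lim_seq_ext; [|apply is_lim_seq_scal_l', Halt].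
  intros K. unfold alt. rewrite <- rsum_scal. apply rsum_ext. intros n _.
  unfold Rdiv. rewrite inv_evenR_pow. ring.
Qed.

Lemma binom_small a b : (a < b)%nat -> binom a b = 0%nat.
Proof.
  revert b; induction a; intros b H; destruct b; try lia; simpl; auto.
  rewrite !IHa by lia. reflexivity.
Qed.

Lemma binom_diag n : binom n n = 1%nat.
Proof. induction n; simpl; auto. rewrite IHn, binom_small by lia. reflexivity. Qed.

Lemma binom_S_diag n : binom (S n) n = S n.
Proof.
  induction n; [reflexivity|].
  change (binom (S (S n)) (S n)) with (binom (S n) n + binom (S n) (S n))%nat.
  rewrite IHn, binom_diag. lia.
Qed.

Lemma d_r0_lt r k : (k < r)%nat ->
  d_r0 r (S k) = (1 - / 2 ^ (2 * k + 2)) * (2 * INR k + 2).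
Proof.
  intros Hk. unfold d_r0. rewrite binom_small by lia.
  replace (2 * S k)%nat with (2 * k + 2)%nat by lia.
  rewrite plus_INR, mult_INR. simpl. ring.
Qed.

Lemma d_r0_diag r :
  d_r0 r (S r) = (2 - / 2 ^ (2 * r + 2)) * (2 * INR r + 2).
Proof.
  unfold d_r0. replace (2 * S r)%nat with (S (2 * r + 1)) by lia.
  rewrite binom_S_diag. replace (S (2 * r + 1)) with (2 * r + 2)%nat by lia.
  rewrite plus_INR, mult_INR. simpl. ring.
Qed.

Lemma pow2_add1 n : 2 ^ (n + 1) = 2 * 2 ^ n.
Proof. rewrite Nat.add_1_r. reflexivity. Qed.

Lemma mtv_2s3_eq_zeta r :
  mtv (repeat 2%nat r ++ 3%nat :: nil) =
  rsum (fun k => (-1) ^ k * ((1 - / 2 ^ (2 * k + 2)) * (2 * INR k + 2)) * / 2 ^ (2 * k + 2)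
                 * zeta (2 * k + 3) * mtv (repeat 2%nat (r - k))) 0 (S r)
  + (-1) ^ r * (2 * INR r + 2) * / 2 ^ (2 * r + 2) * zeta (2 * r + 3).
Proof.
  rewrite mtv_2s3_eq_series, Series1_inv_evenR_pow, Rmult_plus_distr_l, <- rsum_scal by lia.
  replace (2 * r + 3)%nat with (2 * r + 2 + 1)%nat by lia.
  f_equal.
  - apply rsum_ext. intros k _. rewrite Series1_alt_inv_evenR_pow by lia.
    replace (2 * k + 3)%nat with (2 * k + 2 + 1)%nat by lia.
    rewrite pow2_add1. assert (2 ^ (2 * k + 2) <> 0) by (apply pow_nonzero; lra).
    field. auto.
  - rewrite pow2_add1. assert (2 ^ (2 * r + 2) <> 0) by (apply pow_nonzero; lra).
    field. auto.
Qed.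

Lemma neg1_pow_S_add1 k : (-1) ^ (S k + 1) = (-1) ^ k.
Proof. rewrite Nat.add_1_r. simpl. ring. Qed.

Lemma mtv_nil : mtv nil = 1.
Proof. unfold mtv. simpl. now rewrite Lim_seq_const. Qed.

Theorem theorem3p3 (r : nat) :
  mtv (repeat 2%nat r ++ 3%nat :: nil) =
  rsum (fun k => (-1) ^ (k + 1) * d_r0 r k * / 2 ^ (2 * k) * zeta (2 * k + 1)
                 * mtv (repeat 2%nat (r + 1 - k))) 1 (r + 1).
Proof.
  rewrite mtv_2s3_eq_zeta. replace (r + 1)%nat with (S r) by lia.
  rewrite rsum_shift, !rsum_Sr, Nat.add_0_l, !Nat.sub_diag.
  replace (2 * S r)%nat with (2 * r + 2)%nat by lia.
  replace (2 * r + 2 + 1)%nat with (2 * r + 3)%nat by lia.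
  change (repeat 2%nat 0) with (@nil nat).
  rewrite d_r0_diag, mtv_nil, (rsum_ext _ (fun k => (-1) ^ (S k + 1) * d_r0 r (S k)
      * / 2 ^ (2 * S k) * zeta (2 * S k + 1) * mtv (repeat 2%nat (S r - S k)))).
  - rewrite neg1_pow_S_add1. ring.
  - intros k Hk. rewrite d_r0_lt by lia.
    replace (2 * S k)%nat with (2 * k + 2)%nat by lia.
    replace (2 * k + 2 + 1)%nat with (2 * k + 3)%nat by lia.
    rewrite neg1_pow_S_add1. reflexivity.
Qed.
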